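(* Let $X,Y$ be metric vector spaces over $K$ with metrics $d_X,d_Y$, where $d_Y$ is translation invariant, and let $F:X\to Y$ be a linear mapping. (a) If $F\in B_d(X,Y)$, then $F$ is continuous. Conversely, suppose $F$ is continuous, $d_X$ is translation invariant and scale bounded on $X$ with constants $C_\alpha=M(\alpha)|\alpha|$ where $M$ is a positive bounded function on $K$, and $Y$ is a normed space whose metric $d_Y$ is the one induced by its norm. Then $F\in B_d(X,Y)$. (b) If $d_X$ is translation invariant and $F$ is continuous at a single point, then $F$ is continuous.
   Context: $K$ is $\mathbb{R}$ or $\mathbb{C}$. For maps $F_1,F_2:X\to Y$, $d(F_1,F_2)=\max\left\{\sup_{x\neq0,x\in X}\frac{d_Y[F_1(x),F_2(x)]}{d_X(x,0)},\ d_Y[F_1(0),F_2(0)]\right\}$, and $B_d(X,Y)$ is the set of maps $F:X\to Y$ with $d(F,0)<\infty$. A translation invariant metric $d_X$ is scale bounded on $X$ if for every $\alpha\in K$ there is a positive number $C_\alpha$ with $d_X(\alpha s,0)\le C_\alpha d_X(s,0)$ for all $s\in X$. *)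

From HB Require Import structures.
From mathcomp Require Import all_boot all_order all_algebra.
From mathcomp Require Import all_classical all_reals all_analysis.
From mathcomp Require Import complex.
Set Implicit Arguments. Unset Strict Implicit. Unset Printing Implicit Defensive.
Import Order.TTheory GRing.Theory Num.Theory.
Local Open Scope ring_scope.
Local Open Scope classical_set_scope.

(* Scalars: a field K together with its (real-valued) absolute value absK.
   The theorem is instantiated below with K = R (absK = |.|) and
   K = C = Rcomplex R (absK = complex modulus). *)
Section Defs.
Variables (R : realType) (K : fieldType) (absK : K -> R).

Definition is_metric (X : Type) (d : X -> X -> R) : Prop :=
  [/\ forall x y, 0 <= d x y,
      forall x y, d x y = 0 <-> x = y,
      forall x y, d x y = d y x &
      forall x y z, d x z <= d x y + d y z].

Definition metric_vector_space (X : lmodType K) (d : X -> X -> R) : Prop :=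
  [/\ is_metric d,
      (forall (x y : X) (e : R), 0 < e -> exists2 r : R, 0 < r &
         forall x' y' : X, d x x' < r -> d y y' < r -> d (x + y) (x' + y') < e) &
      (forall (a : K) (x : X) (e : R), 0 < e -> exists2 r : R, 0 < r &
         forall (b : K) (x' : X), absK (a - b) < r -> d x x' < r ->
           d (a *: x) (b *: x') < e)].

Definition translation_invariant (X : lmodType K) (d : X -> X -> R) : Prop :=
  forall x y z : X, d (x + z) (y + z) = d x y.

Definition is_norm (Y : lmodType K) (n : Y -> R) : Prop :=
  [/\ forall y, 0 <= n y,
      forall y, n y = 0 <-> y = 0,
      forall (a : K) y, n (a *: y) = absK a * n y &
      forall y1 y2, n (y1 + y2) <= n y1 + n y2].

Definition continuous_at_m (X Y : Type) (dX : X -> X -> R) (dY : Y -> Y -> R)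
  (f : X -> Y) (x : X) : Prop :=
  forall e : R, 0 < e -> exists2 r : R, 0 < r &
    forall y : X, dX x y < r -> dY (f x) (f y) < e.

Definition continuous_m (X Y : Type) (dX : X -> X -> R) (dY : Y -> Y -> R)
  (f : X -> Y) : Prop := forall x, continuous_at_m dX dY f x.

Definition dmap (X Y : lmodType K) (dX : X -> X -> R) (dY : Y -> Y -> R)
  (F1 F2 : X -> Y) : \bar R :=
  Order.max (ereal_sup [set ((dY (F1 x) (F2 x)) / dX x 0)%:E | x in [set x : X | x != 0]])
            ((dY (F1 0) (F2 0))%:E).

Definition in_Bd (X Y : lmodType K) (dX : X -> X -> R) (dY : Y -> Y -> R)
  (F : X -> Y) : Prop := (dmap dX dY F (fun _ : X => (0 : Y)%R) < +oo)%E.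

Definition theorem9_for : Prop :=
  forall (X Y : lmodType K) (dX : X -> X -> R) (dY : Y -> Y -> R)
         (F : {linear X -> Y}),
  metric_vector_space dX -> metric_vector_space dY ->
  translation_invariant dY ->
  (in_Bd dX dY F -> continuous_m dX dY F) /\
  (continuous_m dX dY F -> translation_invariant dX ->
   forall M : K -> R, (forall a, 0 < M a) -> (exists B : R, forall a, M a <= B) ->
   (forall (a : K) (s : X), dX (a *: s) 0 <= M a * absK a * dX s 0) ->
   forall nY : Y -> R, is_norm nY -> (forall y1 y2, dY y1 y2 = nY (y1 - y2)) ->
   in_Bd dX dY F) /\
  (translation_invariant dX -> (exists x0, continuous_at_m dX dY F x0) ->
   continuous_m dX dY F).

End Defs.

(** Linearity reduces everything to the behaviour of [F] near [0]: by
    translation invariance of [dY], [dY (F x) (F y) = dY (F (x - y)) 0], so the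
    bound [dY (F z) 0 <= C dX z 0] encoded by [B_d] gives continuity at [x] as
    soon as [x - y] is close to [0], which is continuity of subtraction in the
    metric vector space [X].  Conversely, continuity at [0] bounds [F] on a ball
    of radius [r]; rescaling an arbitrary [x <> 0] into that ball with a scalar
    of modulus proportional to [r / dX x 0], which scale boundedness allows,
    turns the bound into [|F x| <= (2 B / r) dX x 0] by homogeneity of the
    norm.  For (b), translating by [x0 - x] moves continuity at [x0] to any
    [x]. *)
From HB Require Import structures.
From mathcomp Require Import all_boot all_order all_algebra.
From mathcomp Require Import all_classical all_reals all_analysis.
From mathcomp Require Import complex.
From mathcomp Require Import ring.
Import Order.TTheory GRing.Theory Num.Theory.
Local Open Scope ring_scope.
Local Open Scope classical_set_scope.

Section MetricFacts.
Variables (R : realType) (X : eqType) (d : X -> X -> R).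
Hypothesis d_metric : is_metric d.

Lemma metric_xx (x : X) : d x x = 0.
Proof. by case: d_metric => _ dE _ _; apply/dE. Qed.

Lemma metric_gt0 (x y : X) : x != y -> 0 < d x y.
Proof.
case: d_metric => d0 dE _ _ xy; rewrite lt_def d0 andbT.
by apply: contraNN xy => /eqP /dE ->.
Qed.

End MetricFacts.

Section TheoremNine.
Variables (R : realType) (K : fieldType) (absK : K -> R).

Lemma translation_invariant_subr (X : lmodType K) (d : X -> X -> R) :
  translation_invariant d -> forall x y, d x y = d (x - y) 0.
Proof. by move=> ti x y; rewrite -(ti x y (- y)) subrr. Qed.

Lemma additive_dist_subr (X Y : lmodType K) (dY : Y -> Y -> R)
    (F : {additive X -> Y}) :
  translation_invariant dY -> forall x y, dY (F x) (F y) = dY (F (x - y)) 0.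
Proof. by move=> ti x y; rewrite raddfB -translation_invariant_subr. Qed.

Lemma continuous_at_translate (X Y : lmodType K) (dX : X -> X -> R)
    (dY : Y -> Y -> R) (F : {additive X -> Y}) (x0 : X) :
  translation_invariant dX -> translation_invariant dY ->
  continuous_at_m dX dY F x0 -> continuous_m dX dY F.
Proof.
move=> tiX tiY Fx0 x e /Fx0[r r0 Hr]; exists r => // y dxy.
have shift : x0 - (y + (x0 - x)) = x - y.
  by rewrite opprD opprB addrCA subrKC addrC.
rewrite additive_dist_subr // -shift -additive_dist_subr //; apply: Hr.
by rewrite translation_invariant_subr // shift -translation_invariant_subr.
Qed.

Hypothesis abs0 : absK 0 = 0.

Lemma continuous_subr {X : lmodType K} {dX : X -> X -> R} :
  metric_vector_space absK dX -> forall x, continuous_m dX dX (fun y => x - y).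
Proof.
move=> [dXm addc scalc] x z e e0.
have [r2 r20 Hadd] := addc x (- z) e e0.
have [r1 r10 Hsc] := scalc (-1) z r2 r20.
exists r1 => // y dzy; apply: Hadd; first by rewrite metric_xx.
by have := Hsc (-1) y; rewrite subrr abs0 !scaleN1r; apply.
Qed.

Lemma in_BdP {X Y : lmodType K} {dX : X -> X -> R} {dY : Y -> Y -> R}
    (F : X -> Y) :
  is_metric dX ->
  in_Bd dX dY F <->
  exists2 C : R, 0 < C & forall x, x != 0 -> dY (F x) 0 <= C * dX x 0.
Proof.
move=> dXm; have dx0 x : x != 0 -> 0 < dX x 0 by exact: metric_gt0.
rewrite /in_Bd /dmap gt_max ltry andbT; split.
- set S := ereal_sup _ => supS.
  have ubS x : x != 0 -> ((dY (F x) 0 / dX x 0)%:E <= S)%E.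
    by move=> x0; apply: ereal_sup_ubound; exists x.
  move: ubS supS; case: S => [s| |] ubS // _.
  + exists (`|s| + 1) => [|x x0]; first by rewrite ltr_pwDr.
    have := ubS x x0; rewrite lee_fin ler_pdivrMr ?dx0 // => /le_trans; apply.
    by rewrite ler_pM2r ?dx0 // (le_trans (ler_norm s)) ?lerDl.
  + by exists 1 => // x /ubS; rewrite leeNy_eq.
- case=> C _ HC; apply: (@le_lt_trans _ _ C%:E); last exact: ltry.
  apply: ge_ereal_sup => _ [x /= x0 <-].
  by rewrite lee_fin ler_pdivrMr ?dx0 ?HC.
Qed.

Lemma bounded_additive_continuous (X Y : lmodType K) (dX : X -> X -> R)
    (dY : Y -> Y -> R) (F : {additive X -> Y}) (C : R) :
  metric_vector_space absK dX -> is_metric dY -> translation_invariant dY ->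
  0 < C -> (forall x, x != 0 -> dY (F x) 0 <= C * dX x 0) ->
  continuous_m dX dY F.
Proof.
move=> dXmvs dYm tiY C0 HC x e e0.
have [dXm _ _] := dXmvs.
have [r r0 Hr] := continuous_subr dXmvs x x _ (divr_gt0 e0 C0).
exists r => // y /Hr; rewrite subrr => dxy.
rewrite additive_dist_subr //; have [->|xy0] := eqVneq (x - y) 0.
  by rewrite raddf0 metric_xx.
apply: le_lt_trans (HC _ xy0) _.
by case: dXm => _ _ dXC _; rewrite -ltr_pdivlMl // mulrC dXC.
Qed.

Hypothesis abs_onto_pos : forall t : R, 0 < t -> exists a : K, absK a = t.

Lemma continuous0_norm_bound (X Y : lmodType K) (dX : X -> X -> R)
    (dY : Y -> Y -> R) (nY : Y -> R) (F : {linear X -> Y}) (M : K -> R) (B : R) :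
  is_metric dX -> is_metric dY -> is_norm absK nY ->
  (forall y1 y2, dY y1 y2 = nY (y1 - y2)) ->
  (forall a, 0 < M a) -> (forall a, M a <= B) ->
  (forall a s, dX (a *: s) 0 <= M a * absK a * dX s 0) ->
  continuous_at_m dX dY F 0 ->
  exists2 C : R, 0 < C & forall x, x != 0 -> dY (F x) 0 <= C * dX x 0.
Proof.
move=> dXm [_ _ dYC _] [_ _ nYZ _] dYn Mpos MB Msc /(_ 1 ltr01)[r r0 Hr].
have B0 : 0 < B by apply: lt_le_trans (Mpos 0) (MB 0).
exists (2 * B / r) => [|x x0]; first by rewrite !mulr_gt0 ?invr_gt0.
have dx0 : 0 < dX x 0 by exact: metric_gt0.
pose t := r / (2 * B * dX x 0).
have t0 : 0 < t by rewrite divr_gt0 // !mulr_gt0.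
have [a at_] := abs_onto_pos _ t0.
have Bt : B * t * dX x 0 = r / 2 by rewrite /t; field; rewrite !gt_eqF.
have dax : dX 0 (a *: x) < r.
  case: dXm => _ _ dXC _; rewrite dXC; apply: le_lt_trans (Msc a x) _.
  rewrite at_; apply: (@le_lt_trans _ _ (B * t * dX x 0)).
    by rewrite ler_pM2r // ler_pM2r.
  by rewrite Bt ltr_pdivrMr // ltr_pMr // ltr1n.
have := Hr _ dax; rewrite dYC dYn raddf0 subr0 linearZ nYZ at_ => tFx.
have -> : 2 * B / r * dX x 0 = t^-1 by rewrite /t; field; rewrite !gt_eqF.
rewrite dYn subr0 -(ler_pM2l t0) mulfV ?gt_eqF //; exact: ltW.
Qed.

Lemma theorem9_for_abs : theorem9_for absK.
Proof.
move=> X Y dX dY F dXmvs [dYm _ _] tiY; have [dXm _ _] := dXmvs.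
split; [|split].
- by move=> /(in_BdP F dXm)[C C0]; exact: bounded_additive_continuous.
- move=> Fc _ M Mpos [B MB] Msc nY nYn dYn; apply/(in_BdP F dXm).
  exact: continuous0_norm_bound dYm nYn dYn Mpos MB Msc (Fc 0).
- by move=> tiX [x0]; exact: continuous_at_translate.
Qed.

End TheoremNine.

Theorem theorem9 (R : realType) :
  theorem9_for (K := R) (fun a : R => `|a|) /\
  theorem9_for (K := Rcomplex R) (fun z : Rcomplex R => `|z| : R).
Proof.
split; apply: theorem9_for_abs; rewrite ?normr0 //.
- by move=> t t0; exists t; rewrite gtr0_norm.
- move=> t t0; exists (Complex t 0).
  by rewrite /Num.norm /= expr0n /= addr0 sqrtr_sqr gtr0_norm.
Qed.
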